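(* (Fidelity susceptibility integral.) Let $x_0,\dots,x_q$ be complex numbers (repetitions allowed), $q\ge1$, $0\le j\le q-1$, and $\beta>0$. Then $$\int_0^{\beta/2}\tau\,e^{-\tau[x_{j+1},\ldots,x_q]}\,e^{-(\beta-\tau)[x_0,\ldots,x_j]}\,\mathrm{d}\tau=\sum_{r=0}^{j}e^{-\frac{\beta}{2}[x_0,\ldots,x_r]}\sum_{m=j+1}^{q}e^{-\frac{\beta}{2}[x_r,\ldots,x_q,x_m]}.$$
   Context: For $t\in\mathbb{R}$ and numbers $y_0,\dots,y_p$ (repetitions allowed), $e^{t[y_0,\ldots,y_p]}$ denotes the divided difference of $f(x)=e^{tx}$, $f[y_0,\ldots,y_p]=\frac{1}{2\pi i}\oint_\Gamma\frac{f(x)}{\prod_{i=0}^p(x-y_i)}\,\mathrm{d}x$, $\Gamma$ a positively oriented contour enclosing all $y_i$. The multiset $[x_r,\ldots,x_q,x_m]$ contains $x_m$ twice. *)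

From Stdlib Require Import Reals List.
From Coquelicot Require Import Coquelicot.
Import ListNotations.
Open Scope R_scope.

Definition cexp (z : C) : C :=
  (exp (Re z) * cos (Im z), exp (Re z) * sin (Im z)).

Definition node_poly (ys : list C) (z : C) : C :=
  fold_right (fun y acc => Cmult (Cminus z y) acc) (RtoC 1) ys.

(* radius of a circle centered at 0 enclosing all points of ys *)
Definition dd_radius (ys : list C) : R :=
  1 + fold_right (fun y acc => Cmod y + acc) 0 ys.

(* Divided difference of f(x) = e^{t x} on the multiset ys:
   (1/(2 pi i)) \oint_Gamma e^{t z} / prod (z - y_i) dz, with Gamma the positively
   oriented circle |z| = dd_radius ys, parametrized by z = rho e^{i theta},
   dz = i rho e^{i theta} d theta (the factor i cancels with 1/i). *)
Definition exp_dd (t : R) (ys : list C) : C :=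
  let rho := dd_radius ys in
  RInt (V := C_R_CompleteNormedModule)
    (fun th : R =>
       let w := (rho * cos th, rho * sin th) : C in
       Cdiv (Cmult (cexp (Cmult (RtoC t) w)) w)
            (Cmult (RtoC (2 * PI)) (node_poly ys w)))
    0 (2 * PI).

Definition pts (x : nat -> C) (a b : nat) : list C := map x (seq a (S b - a)).

(* Write [D_t(L)] for [e^(t[L])].  Read off from the contour integral, [D] satisfies
   [D_t([]) = 0], [D_0(L) = 1] if [L] is a single node and [0] otherwise, and the linear
   ODE [d/dt D_t(y :: L) = y D_t(y :: L) + D_t(L)]: the ODE by differentiating under the
   integral sign, the initial values from the moments [∮ w^-n / p_L(w) dθ], which vanish
   unless [L = []] and [n = 0].  Uniqueness for [f' = c f + g] then yields the Leibniz rule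
   [D_(t1+t2)[x_a..x_b] = Σ_k D_t1[x_a..x_k] D_t2[x_k..x_b]] and the derivative rule
   [t D_t[x_a..x_b] = Σ_m D_t[x_a..x_b,x_m]].
   With [J_k(s) = ∫_0^s τ D_-τ[x_(j+1)..x_q] D_τ[x_k..x_j] dτ], the same ODE argument,
   run downwards in [r], gives
   [Σ_(m>j) D_-s[x_r..x_q,x_m] = Σ_(k=r..j) D_-s[x_r..x_k] J_k(s)];
   at [s = β/2] the Leibniz rule turns both sides of the theorem into
   [Σ_k D_-β[x_0..x_k] J_k(β/2)]. *)

From Stdlib Require Import Reals List Lra Lia Permutation.
From Coquelicot Require Import Coquelicot.
Import ListNotations.
Open Scope R_scope.
Open Scope C_scope.

Notation CR := C_R_CompleteNormedModule.

(** * Derivatives of complex-valued functions of a real variable *)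

(* Componentwise; unlike [is_derive] on [C_R_NormedModule] it comes with a product rule. *)
Definition is_derive_RC (f : R -> C) (t : R) (l : C) : Prop :=
  derivable_pt_lim (fun u => fst (f u)) t (fst l) /\
  derivable_pt_lim (fun u => snd (f u)) t (snd l).

Lemma is_derive_RC_ext (f g : R -> C) (t : R) (l l' : C) :
  is_derive_RC f t l -> (forall u, f u = g u) -> l = l' -> is_derive_RC g t l'.
Proof.
  intros [H1 H2] Hfg <-; split;
    [apply (derivable_pt_lim_ext (fun u => fst (f u))) |
     apply (derivable_pt_lim_ext (fun u => snd (f u)))];
    auto; intros; now rewrite Hfg.
Qed.

Lemma is_derive_RC_const (c : C) (t : R) : is_derive_RC (fun _ => c) t 0.
Proof. split; apply derivable_pt_lim_const. Qed.

Lemma is_derive_RC_RtoC (f : R -> R) (t a : R) :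
  derivable_pt_lim f t a -> is_derive_RC (fun u => RtoC (f u)) t (RtoC a).
Proof. split; [assumption | apply derivable_pt_lim_const]. Qed.

Lemma is_derive_RC_id (t : R) : is_derive_RC RtoC t 1.
Proof. apply (is_derive_RC_RtoC (fun u => u)), derivable_pt_lim_id. Qed.

Lemma is_derive_RC_plus (f g : R -> C) (t : R) (a b : C) :
  is_derive_RC f t a -> is_derive_RC g t b -> is_derive_RC (fun u => f u + g u) t (a + b).
Proof. intros [] []; split; now apply derivable_pt_lim_plus. Qed.

Lemma is_derive_RC_opp (f : R -> C) (t : R) (a : C) :
  is_derive_RC f t a -> is_derive_RC (fun u => - f u) t (- a).
Proof. intros []; split; now apply derivable_pt_lim_opp. Qed.

Lemma is_derive_RC_minus (f g : R -> C) (t : R) (a b : C) :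
  is_derive_RC f t a -> is_derive_RC g t b -> is_derive_RC (fun u => f u - g u) t (a - b).
Proof. intros; apply is_derive_RC_plus, is_derive_RC_opp; auto. Qed.

Lemma is_derive_RC_mult (f g : R -> C) (t : R) (a b : C) :
  is_derive_RC f t a -> is_derive_RC g t b ->
  is_derive_RC (fun u => f u * g u) t (a * g t + f t * b).
Proof.
  intros [Hf1 Hf2] [Hg1 Hg2]; split.
  - apply (derivable_pt_lim_ext (fun u => fst (f u) * fst (g u) - snd (f u) * snd (g u))%R);
      [reflexivity |].
    replace (fst (a * g t + f t * b))
      with (fst a * fst (g t) + fst (f t) * fst b - (snd a * snd (g t) + snd (f t) * snd b))%R
      by (simpl; ring).
    apply derivable_pt_lim_minus; now apply derivable_pt_lim_mult.
  - apply (derivable_pt_lim_ext (fun u => fst (f u) * snd (g u) + snd (f u) * fst (g u))%R);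
      [reflexivity |].
    replace (snd (a * g t + f t * b))
      with (fst a * snd (g t) + fst (f t) * snd b + (snd a * fst (g t) + snd (f t) * fst b))%R
      by (simpl; ring).
    apply derivable_pt_lim_plus; now apply derivable_pt_lim_mult.
Qed.

Lemma is_derive_RC_inv (f : R -> C) (t : R) (a : C) :
  f t <> 0 -> is_derive_RC f t a -> is_derive_RC (fun u => / f u) t (- (a * / f t * / f t)).
Proof.
  intros Hnz [H1 H2].
  set (N := fun u => (fst (f u) * fst (f u) + snd (f u) * snd (f u))%R).
  assert (HN : N t <> 0%R).
  { intro E; apply Hnz; unfold N in E; destruct (f t) as [u v]; simpl in E.
    assert (u = 0%R) by nra; assert (v = 0%R) by nra; now subst. }
  assert (dN : derivable_pt_lim N t
                 (fst a * fst (f t) + fst (f t) * fst a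
                  + (snd a * snd (f t) + snd (f t) * snd a))%R).
  { apply derivable_pt_lim_plus; now apply derivable_pt_lim_mult. }
  split.
  - apply (derivable_pt_lim_ext (fun u => fst (f u) / N u)%R).
    { intros u; unfold N; simpl; now rewrite !Rmult_1_r. }
    replace (fst (- (a * / f t * / f t)))
      with ((fst a * N t - (fst a * fst (f t) + fst (f t) * fst a
                 + (snd a * snd (f t) + snd (f t) * snd a)) * fst (f t)) / (N t)²)%R.
    + now apply (derivable_pt_lim_div (fun u => fst (f u)) N).
    + unfold N, Rsqr in *; destruct (f t) as [u v], a as [p q]; simpl in *; field; exact HN.
  - apply (derivable_pt_lim_ext (fun u => - snd (f u) / N u)%R).
    { intros u; unfold N; simpl; now rewrite !Rmult_1_r. }
    replace (snd (- (a * / f t * / f t)))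
      with ((- snd a * N t - (fst a * fst (f t) + fst (f t) * fst a
                 + (snd a * snd (f t) + snd (f t) * snd a)) * - snd (f t)) / (N t)²)%R.
    + apply (derivable_pt_lim_div (fun u => - snd (f u))%R N); auto.
      now apply derivable_pt_lim_opp.
    + unfold N, Rsqr in *; destruct (f t) as [u v], a as [p q]; simpl in *; field; exact HN.
Qed.

Lemma is_derive_RC_pow (f : R -> C) (t : R) (a : C) (n : nat) :
  is_derive_RC f t a -> is_derive_RC (fun u => f u ^ n) t (INR n * f t ^ (n - 1) * a).
Proof.
  intros H; induction n as [| n IH].
  - eapply is_derive_RC_ext; [apply (is_derive_RC_const 1) | reflexivity |].
    simpl; ring.
  - eapply is_derive_RC_ext; [apply (is_derive_RC_mult _ _ _ _ _ H IH) | reflexivity |].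
    rewrite S_INR, RtoC_plus; replace (S n - 1)%nat with n by lia.
    destruct n as [| n].
    + change (INR 0) with 0%R; ring.
    + replace (S n - 1)%nat with n by lia.
      rewrite Cpow_S; ring.
Qed.

Lemma is_derive_RC_cexp (g : R -> C) (t : R) (a : C) :
  is_derive_RC g t a -> is_derive_RC (fun u => cexp (g u)) t (a * cexp (g t)).
Proof.
  intros [H1 H2]; unfold cexp, Re, Im; split; simpl.
  - replace (fst a * (exp (fst (g t)) * cos (snd (g t)))
             - snd a * (exp (fst (g t)) * sin (snd (g t))))%R
      with (fst a * exp (fst (g t)) * cos (snd (g t))
            + exp (fst (g t)) * (- sin (snd (g t)) * snd a))%R by ring.
    apply (derivable_pt_lim_mult (fun u => exp (fst (g u))) (fun u => cos (snd (g u)))).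
    + rewrite Rmult_comm; apply (derivable_pt_lim_comp (fun u => fst (g u)) exp); auto.
      apply derivable_pt_lim_exp.
    + apply (derivable_pt_lim_comp (fun u => snd (g u)) cos); auto.
      apply derivable_pt_lim_cos.
  - replace (fst a * (exp (fst (g t)) * sin (snd (g t)))
             + snd a * (exp (fst (g t)) * cos (snd (g t))))%R
      with (fst a * exp (fst (g t)) * sin (snd (g t))
            + exp (fst (g t)) * (cos (snd (g t)) * snd a))%R by ring.
    apply (derivable_pt_lim_mult (fun u => exp (fst (g u))) (fun u => sin (snd (g u)))).
    + rewrite Rmult_comm; apply (derivable_pt_lim_comp (fun u => fst (g u)) exp); auto.
      apply derivable_pt_lim_exp.
    + apply (derivable_pt_lim_comp (fun u => snd (g u)) sin); auto.
      apply derivable_pt_lim_sin.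
Qed.

Lemma is_derive_RC_comp_affine (f : R -> C) (c d t : R) (a : C) :
  is_derive_RC f (c * t + d)%R a -> is_derive_RC (fun u => f (c * u + d)%R) t (RtoC c * a).
Proof.
  intros [H1 H2].
  pose proof (derivable_pt_lim_plus _ _ t _ _
                (derivable_pt_lim_scal _ c t _ (derivable_pt_lim_id t))
                (derivable_pt_lim_const d t)) as Haff.
  replace (c * 1 + 0)%R with c in Haff by ring.
  split; simpl.
  - replace (c * fst a - 0 * snd a)%R with (fst a * c)%R by ring.
    exact (derivable_pt_lim_comp _ (fun u => fst (f u)) _ _ _ Haff H1).
  - replace (c * snd a + 0 * fst a)%R with (snd a * c)%R by ring.
    exact (derivable_pt_lim_comp _ (fun u => snd (f u)) _ _ _ Haff H2).
Qed.

Lemma is_derive_RC_comp_opp (f : R -> C) (t : R) (a : C) :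
  is_derive_RC f (- t)%R a -> is_derive_RC (fun u => f (- u)%R) t (- a).
Proof.
  intros H.
  assert (H' : is_derive_RC f (-1 * t + 0)%R a) by now replace (-1 * t + 0)%R with (- t)%R by ring.
  eapply is_derive_RC_ext.
  - exact (is_derive_RC_comp_affine f (-1) 0 t a H').
  - intros u; cbv beta; now replace (-1 * u + 0)%R with (- u)%R by ring.
  - destruct a; unfold RtoC, Cmult, Copp; simpl; f_equal; ring.
Qed.

Lemma is_derive_RC_is_derive (f : R -> C) (t : R) (l : C) :
  is_derive_RC f t l <-> is_derive (V := C_R_NormedModule) f t l.
Proof.
  split.
  - intros [H1 H2]; apply is_derive_Reals in H1, H2.
    eapply filterdiff_ext; [| apply (filterdiff_comp_2 (fun u => fst (f u)) (fun u => snd (f u))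
                                     (fun p q => (p, q) : C) _ _ (fun p q => (p, q)) H1 H2)].
    + intros u; simpl; now destruct (f u).
    + apply filterdiff_linear; split.
      * now intros [] [].
      * now intros k [].
      * exists 1%R; split; [lra |]; intros []; rewrite Rmult_1_l; apply Rle_refl.
  - intros H; split; apply is_derive_Reals.
    + exact (filterdiff_comp f fst _ fst H (filterdiff_linear _ is_linear_fst)).
    + exact (filterdiff_comp f snd _ snd H (filterdiff_linear _ is_linear_snd)).
Qed.

Lemma continuous_of_is_derive_RC (f : R -> C) (t : R) (l : C) :
  is_derive_RC f t l -> continuous (U := CR) f t.
Proof.
  intros H; apply is_derive_RC_is_derive in H.
  apply (ex_derive_continuous (V := C_R_NormedModule)); now exists l.
Qed.

Lemma is_derive_RC_0_const (f : R -> C) :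
  (forall t, is_derive_RC f t 0) -> forall t, f t = f 0%R.
Proof.
  intros H t.
  assert (H' : forall u, is_derive (V := C_R_NormedModule) f u zero)
    by (intros u; apply is_derive_RC_is_derive, H).
  destruct (Rtotal_order t 0) as [Hlt | [-> | Hgt]]; auto.
  - apply (eq_is_derive (V := C_R_NormedModule)); auto.
  - symmetry; apply (eq_is_derive (V := C_R_NormedModule)); auto.
Qed.

Lemma cexp_add (a b : C) : cexp a * cexp b = cexp (a + b).
Proof.
  destruct a as [a1 a2], b as [b1 b2]; unfold cexp, Re, Im; simpl.
  rewrite exp_plus, cos_plus, sin_plus; unfold Cmult; simpl; f_equal; ring.
Qed.

Lemma cexp_0 : cexp 0 = 1.
Proof. unfold cexp, Re, Im; simpl; rewrite exp_0, cos_0, sin_0; unfold RtoC; f_equal; ring. Qed.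

Lemma Cmod_cexp (z : C) : Cmod (cexp z) = exp (Re z).
Proof.
  destruct z as [a b]; unfold Cmod, cexp, Re, Im; simpl.
  replace (exp a * cos b * (exp a * cos b * 1) + exp a * sin b * (exp a * sin b * 1))%R
    with (exp a * exp a * (Rsqr (sin b) + Rsqr (cos b)))%R by (unfold Rsqr; ring).
  rewrite sin2_cos2, Rmult_1_r; apply sqrt_square; left; apply exp_pos.
Qed.

Lemma Cmod_cexp_le (z : C) : (Cmod (cexp z) <= exp (Cmod z))%R.
Proof.
  rewrite Cmod_cexp.
  assert (Hre : (Re z <= Cmod z)%R)
    by (pose proof (re_le_Cmod z); pose proof (Rle_abs (Re z)); lra).
  destruct (Rle_lt_or_eq_dec _ _ Hre) as [Hlt | ->];
    [left; now apply exp_increasing | apply Rle_refl].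
Qed.

Lemma is_derive_RC_cexp_scal (c : C) (t : R) :
  is_derive_RC (fun u => cexp (c * RtoC u)) t (c * cexp (c * RtoC t)).
Proof.
  eapply is_derive_RC_ext;
    [apply is_derive_RC_cexp, is_derive_RC_mult; [apply is_derive_RC_const | apply is_derive_RC_id]
    | reflexivity | cbv beta; ring].
Qed.

(* Multiplying by the integrating factor [cexp (- c t)] reduces uniqueness to
   the case of a vanishing derivative. *)
Lemma linear_ode_unique (F G h : R -> C) (c : C) :
  (forall t, is_derive_RC F t (c * F t + h t)) ->
  (forall t, is_derive_RC G t (c * G t + h t)) ->
  F 0%R = G 0%R -> forall t, F t = G t.
Proof.
  intros HF HG H0 t.
  set (D := fun u => cexp (- c * RtoC u) * (F u - G u)).
  assert (HD : forall u, is_derive_RC D u 0).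
  { intros u; eapply is_derive_RC_ext;
      [apply (is_derive_RC_mult (fun u => cexp (- c * RtoC u)) (fun u => F u - G u));
         [apply is_derive_RC_cexp_scal | apply (is_derive_RC_minus F G); [apply HF | apply HG]]
      | reflexivity | cbv beta; ring]. }
  pose proof (is_derive_RC_0_const D HD t) as Dt; unfold D in Dt.
  replace (F 0%R - G 0%R) with (RtoC 0) in Dt by (rewrite H0; ring).
  rewrite Cmult_0_r in Dt.
  apply (f_equal (Cmult (cexp (c * RtoC t)))) in Dt.
  rewrite Cmult_assoc, cexp_add, Cmult_0_r in Dt.
  replace (c * RtoC t + - c * RtoC t) with (RtoC 0) in Dt by ring.
  rewrite cexp_0, Cmult_1_l in Dt.
  now apply Ceq_minus.
Qed.

(** * Riemann integrals of complex-valued functions *)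

Definition derivable_RC (f : R -> C) : Prop := forall t, exists l, is_derive_RC f t l.

Lemma derivable_RC_ext (f g : R -> C) :
  derivable_RC f -> (forall t, f t = g t) -> derivable_RC g.
Proof. intros Hf E t; destruct (Hf t) as [l Hl]; exists l; eapply is_derive_RC_ext; eauto. Qed.

Lemma derivable_RC_const (c : C) : derivable_RC (fun _ => c).
Proof. intros t; eexists; apply is_derive_RC_const. Qed.

Lemma derivable_RC_id : derivable_RC RtoC.
Proof. intros t; eexists; apply is_derive_RC_id. Qed.

Lemma derivable_RC_plus (f g : R -> C) :
  derivable_RC f -> derivable_RC g -> derivable_RC (fun t => f t + g t).
Proof. intros Hf Hg t; destruct (Hf t), (Hg t); eexists; apply is_derive_RC_plus; eauto. Qed.

Lemma derivable_RC_minus (f g : R -> C) :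
  derivable_RC f -> derivable_RC g -> derivable_RC (fun t => f t - g t).
Proof. intros Hf Hg t; destruct (Hf t), (Hg t); eexists; apply is_derive_RC_minus; eauto. Qed.

Lemma derivable_RC_mult (f g : R -> C) :
  derivable_RC f -> derivable_RC g -> derivable_RC (fun t => f t * g t).
Proof. intros Hf Hg t; destruct (Hf t), (Hg t); eexists; apply is_derive_RC_mult; eauto. Qed.

Lemma derivable_RC_inv (f : R -> C) :
  derivable_RC f -> (forall t, f t <> 0) -> derivable_RC (fun t => / f t).
Proof. intros Hf Hnz t; destruct (Hf t); eexists; apply is_derive_RC_inv; eauto. Qed.

Lemma derivable_RC_cexp (f : R -> C) : derivable_RC f -> derivable_RC (fun t => cexp (f t)).
Proof. intros Hf t; destruct (Hf t); eexists; apply is_derive_RC_cexp; eauto. Qed.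

Lemma derivable_RC_pow (f : R -> C) (n : nat) : derivable_RC f -> derivable_RC (fun t => f t ^ n).
Proof. intros Hf t; destruct (Hf t); eexists; apply is_derive_RC_pow; eauto. Qed.

Lemma continuous_of_derivable_RC (f : R -> C) (t : R) :
  derivable_RC f -> continuous (U := CR) f t.
Proof. intros Hf; destruct (Hf t) as [l Hl]; exact (continuous_of_is_derive_RC f t l Hl). Qed.

Lemma ex_RInt_derivable_RC (f : R -> C) (a b : R) : derivable_RC f -> ex_RInt (V := CR) f a b.
Proof. intros Hf; apply ex_RInt_continuous; intros; now apply continuous_of_derivable_RC. Qed.

Lemma is_RInt_derive_RC (F f : R -> C) (a b : R) :
  (forall t, is_derive_RC F t (f t)) -> derivable_RC f -> is_RInt (V := CR) f a b (F b - F a).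
Proof.
  intros HF Hf; apply (is_RInt_derive (V := CR) F f a b).
  - intros t _; apply is_derive_RC_is_derive, HF.
  - intros t _; now apply continuous_of_derivable_RC.
Qed.

Lemma is_derive_RC_RInt (f : R -> C) (a t : R) :
  derivable_RC f -> is_derive_RC (fun u => RInt (V := CR) f a u) t (f t).
Proof.
  intros Hf; apply is_derive_RC_is_derive.
  apply (is_derive_RInt (V := CR) f _ a t).
  - apply filter_forall; intros b; now apply RInt_correct, ex_RInt_derivable_RC.
  - now apply continuous_of_derivable_RC.
Qed.

Lemma is_RInt_Cmult_l (c : C) (g : R -> C) (a b : R) (I : C) :
  is_RInt (V := CR) g a b I -> is_RInt (V := CR) (fun t => c * g t) a b (c * I).
Proof.
  intros H.
  pose proof (is_RInt_fct_extend_fst (U := R_NormedModule) (V := R_NormedModule) g a b I H) as H1.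
  pose proof (is_RInt_fct_extend_snd (U := R_NormedModule) (V := R_NormedModule) g a b I H) as H2.
  destruct c as [c1 c2], I as [I1 I2]; simpl in *.
  apply (is_RInt_fct_extend_pair (U := R_NormedModule) (V := R_NormedModule)); simpl.
  - apply (is_RInt_minus (V := R_NormedModule)
             (fun t => c1 * fst (g t))%R (fun t => c2 * snd (g t))%R);
      now apply (is_RInt_scal (V := R_NormedModule)).
  - apply (is_RInt_plus (V := R_NormedModule)
             (fun t => c1 * snd (g t))%R (fun t => c2 * fst (g t))%R);
      now apply (is_RInt_scal (V := R_NormedModule)).
Qed.

Lemma Cmod_RInt_le (f : R -> C) (a b M : R) :
  (a <= b)%R -> ex_RInt (V := CR) f a b -> (forall t, (a <= t <= b)%R -> (Cmod (f t) <= M)%R) ->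
  (Cmod (RInt (V := CR) f a b) <= (b - a) * M)%R.
Proof.
  intros Hab Hex Hb; rewrite Cmod_norm.
  apply (norm_RInt_le (V := CR) f (fun _ => M) a b); auto.
  - intros t Ht; rewrite <- Cmod_norm; auto.
  - now apply RInt_correct.
  - apply (is_RInt_const (V := R_NormedModule)).
Qed.

Lemma RInt_plus_Cmult (f g : R -> C) (c : C) (a b : R) :
  derivable_RC f -> derivable_RC g ->
  RInt (V := CR) (fun t => f t + c * g t) a b = RInt (V := CR) f a b + c * RInt (V := CR) g a b.
Proof.
  intros Hf Hg; apply is_RInt_unique.
  apply (is_RInt_plus (V := CR)); [| apply is_RInt_Cmult_l];
    now apply RInt_correct, ex_RInt_derivable_RC.
Qed.

Lemma RInt_derive_RC_periodic (F f : R -> C) (a b : R) :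
  (forall t, is_derive_RC F t (f t)) -> derivable_RC f -> F b = F a ->
  RInt (V := CR) f a b = RtoC 0.
Proof.
  intros HF Hf Hper; apply is_RInt_unique.
  replace (RtoC 0) with (F b - F a) by (rewrite Hper; ring).
  now apply is_RInt_derive_RC.
Qed.

Lemma Cmod_cexp_sub_le (z : C) : (Cmod (cexp z - 1 - z) <= Cmod z ^ 2 * exp (Cmod z))%R.
Proof.
  set (phi := fun s : R => cexp (z * RtoC s)).
  set (H := fun s : R => RtoC (1 - s) * z * phi s + phi s).
  set (dH := fun s : R => RtoC (1 - s) * (z * z) * phi s).
  assert (Hphi : forall s, is_derive_RC phi s (z * phi s)) by apply is_derive_RC_cexp_scal.
  assert (Hlin : forall s, is_derive_RC (fun s => RtoC (1 - s)) s (RtoC (-1))).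
  { intros s; apply is_derive_RC_RtoC.
    replace (-1)%R with (0 - 1)%R by ring.
    apply (derivable_pt_lim_minus (fun _ => 1%R) id), derivable_pt_lim_id.
    apply derivable_pt_lim_const. }
  assert (HH : forall s, is_derive_RC H s (dH s)).
  { intros s; eapply is_derive_RC_ext.
    - apply is_derive_RC_plus; [apply is_derive_RC_mult; [apply is_derive_RC_mult |] |];
        [apply Hlin | apply (is_derive_RC_const z) | apply Hphi | apply Hphi].
    - reflexivity.
    - unfold dH; rewrite RtoC_minus; ring. }
  assert (HdH : derivable_RC dH).
  { apply derivable_RC_mult; [apply derivable_RC_mult, derivable_RC_const |].
    - intros s; eexists; apply Hlin.
    - intros s; eexists; apply Hphi. }
  pose proof (is_RInt_unique _ _ _ _ (is_RInt_derive_RC H dH 0 1 HH HdH)) as HI.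
  replace (H 1%R - H 0%R) with (cexp z - 1 - z) in HI.
  2:{ unfold H, phi; rewrite !RtoC_minus, Cmult_0_r, cexp_0, Cmult_1_r; ring. }
  rewrite <- HI.
  replace (Cmod z ^ 2 * exp (Cmod z))%R with ((1 - 0) * (Cmod z ^ 2 * exp (Cmod z)))%R by ring.
  apply Cmod_RInt_le; [lra | now apply ex_RInt_derivable_RC |].
  intros s Hs; unfold dH, phi.
  rewrite !Cmod_mult, Cmod_R, Rabs_right by lra.
  assert (Hexp : (Cmod (cexp (z * RtoC s)) <= exp (Cmod z))%R).
  { eapply Rle_trans; [apply Cmod_cexp_le |].
    rewrite Cmod_mult, Cmod_R, Rabs_right by lra.
    destruct (Rle_lt_or_eq_dec (Cmod z * s) (Cmod z)) as [Hlt | ->];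
      [pose proof (Cmod_ge_0 z); nra | left; now apply exp_increasing | apply Rle_refl]. }
  pose proof (Cmod_ge_0 z); pose proof (Cmod_ge_0 (cexp (z * RtoC s))).
  simpl; rewrite Rmult_1_r.
  apply Rmult_le_compat; try nra.
Qed.

Lemma derivable_pt_lim_of_remainder_le (f : R -> R) (t l K : R) : (0 <= K)%R ->
  (forall h, Rabs h <= 1 -> Rabs (f (t + h) - f t - h * l) <= K * (h * h))%R ->
  derivable_pt_lim f t l.
Proof.
  intros HK Hb eps Heps.
  assert (Hdelta : (0 < Rmin 1 (eps / (K + 1)))%R)
    by (apply Rmin_pos; [lra | apply Rdiv_lt_0_compat; lra]).
  exists (mkposreal _ Hdelta); intros h Hh0 Hh; simpl in Hh.
  assert (Hh1 : (Rabs h <= 1)%R) by (pose proof (Rmin_l 1 (eps / (K + 1))); lra).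
  assert (Hh2 : (Rabs h * (K + 1) < eps)%R).
  { assert (Hh' : (Rabs h < eps / (K + 1))%R) by (pose proof (Rmin_r 1 (eps / (K + 1))); lra).
    apply (Rmult_lt_compat_r (K + 1)) in Hh'; [| lra].
    now replace (eps / (K + 1) * (K + 1))%R with eps in Hh' by (field; lra). }
  specialize (Hb h Hh1).
  replace ((f (t + h) - f t) / h - l)%R with ((f (t + h) - f t - h * l) / h)%R by (field; auto).
  unfold Rdiv; rewrite Rabs_mult, Rabs_inv.
  assert (Hp : (0 < Rabs h)%R) by now apply Rabs_pos_lt.
  apply (Rmult_lt_reg_r (Rabs h)); auto.
  rewrite Rmult_assoc, Rinv_l, Rmult_1_r by lra.
  replace (h * h)%R with (Rabs h * Rabs h)%R in Hb by (rewrite <- Rabs_mult; apply Rabs_right; nra).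
  nra.
Qed.

Lemma im_le_Cmod (z : C) : (Rabs (Im z) <= Cmod z)%R.
Proof.
  destruct z as [a b].
  replace (Cmod (a, b)) with (Cmod (b, a)) by (unfold Cmod; simpl; f_equal; ring).
  apply (re_le_Cmod (b, a)).
Qed.

Lemma is_derive_RC_of_remainder_le (F : R -> C) (t : R) (l : C) (K : R) : (0 <= K)%R ->
  (forall h, Rabs h <= 1 -> Cmod (F (t + h)%R - F t - RtoC h * l) <= K * (h * h))%R ->
  is_derive_RC F t l.
Proof.
  intros HK Hb; split; apply (derivable_pt_lim_of_remainder_le _ t _ K HK); intros h Hh;
    eapply Rle_trans; [| apply (Hb h Hh) | | apply (Hb h Hh)].
  - eapply Rle_trans; [| apply re_le_Cmod]; unfold Re; simpl; right; f_equal; ring.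
  - eapply Rle_trans; [| apply im_le_Cmod]; unfold Im; simpl; right; f_equal; ring.
Qed.

(** * Contour integrals over a circle *)

Definition circle (rho th : R) : C := ((rho * cos th)%R, (rho * sin th)%R).

Definition circle_encloses (rho : R) (L : list C) : Prop :=
  (0 < rho)%R /\ List.Forall (fun y => (Cmod y < rho)%R) L.

Definition circle_gap (rho : R) (L : list C) : R :=
  fold_right (fun y acc => (rho - Cmod y) * acc)%R 1%R L.

Lemma is_derive_RC_circle (rho th : R) : is_derive_RC (circle rho) th (Ci * circle rho th).
Proof.
  split; simpl.
  - replace (0 * (rho * cos th) - 1 * (rho * sin th))%R with (rho * - sin th)%R by ring.
    apply (derivable_pt_lim_scal cos), derivable_pt_lim_cos.
  - replace (0 * (rho * sin th) + 1 * (rho * cos th))%R with (rho * cos th)%R by ring.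
    apply (derivable_pt_lim_scal sin), derivable_pt_lim_sin.
Qed.

Lemma derivable_RC_circle (rho : R) : derivable_RC (circle rho).
Proof. intros th; eexists; apply is_derive_RC_circle. Qed.

Lemma Cmod_circle (rho th : R) : (0 <= rho)%R -> Cmod (circle rho th) = rho.
Proof.
  intros Hr; unfold Cmod, circle; simpl.
  replace (rho * cos th * (rho * cos th * 1) + rho * sin th * (rho * sin th * 1))%R
    with (rho * rho * (Rsqr (sin th) + Rsqr (cos th)))%R by (unfold Rsqr; ring).
  rewrite sin2_cos2, Rmult_1_r; now apply sqrt_square.
Qed.

Lemma circle_2PI (rho : R) : circle rho (2 * PI) = circle rho 0.
Proof. unfold circle; now rewrite cos_2PI, sin_2PI, cos_0, sin_0. Qed.

Lemma circle_neq0 (rho th : R) : (0 < rho)%R -> circle rho th <> 0.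
Proof.
  intros Hr E; apply (f_equal Cmod) in E.
  rewrite Cmod_circle, Cmod_0 in E; lra.
Qed.

Lemma Cmod_circle_sub_ge (rho th : R) (y : C) :
  (0 <= rho)%R -> (rho - Cmod y <= Cmod (circle rho th - y))%R.
Proof.
  intros Hr; pose proof (Cmod_triangle (circle rho th - y) y) as Ht.
  replace (circle rho th - y + y) with (circle rho th) in Ht by ring.
  rewrite Cmod_circle in Ht; lra.
Qed.

Lemma circle_sub_neq0 (rho th : R) (y : C) : (Cmod y < rho)%R -> circle rho th - y <> 0.
Proof.
  intros Hy E; pose proof (Cmod_ge_0 y).
  pose proof (Cmod_circle_sub_ge rho th y ltac:(lra)) as Hge.
  rewrite E, Cmod_0 in Hge; lra.
Qed.

Lemma circle_encloses_cons (rho : R) (y : C) (L : list C) :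
  circle_encloses rho (y :: L) -> (Cmod y < rho)%R /\ circle_encloses rho L.
Proof. intros [Hr HL]; inversion HL; repeat split; auto. Qed.

Lemma circle_gap_pos (rho : R) (L : list C) : circle_encloses rho L -> (0 < circle_gap rho L)%R.
Proof.
  induction L as [| y L IH]; intros H; simpl; [lra |].
  apply circle_encloses_cons in H as [Hy HL].
  apply Rmult_lt_0_compat; [lra | auto].
Qed.

Lemma Cmod_node_poly_circle_ge (rho th : R) (L : list C) :
  circle_encloses rho L -> (circle_gap rho L <= Cmod (node_poly L (circle rho th)))%R.
Proof.
  induction L as [| y L IH]; intros H; simpl.
  - rewrite Cmod_1; lra.
  - pose proof (circle_gap_pos _ _ (proj2 (circle_encloses_cons _ _ _ H))) as Hgap.
    pose proof H as [Hr _]; apply circle_encloses_cons in H as [Hy HL].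
    rewrite Cmod_mult; apply Rmult_le_compat; auto; [lra | lra |].
    pose proof (Cmod_circle_sub_ge rho th y ltac:(lra)); lra.
Qed.

Lemma node_poly_circle_neq0 (rho th : R) (L : list C) :
  circle_encloses rho L -> node_poly L (circle rho th) <> 0.
Proof.
  intros H E; pose proof (Cmod_node_poly_circle_ge rho th L H) as Hge.
  pose proof (circle_gap_pos _ _ H); rewrite E, Cmod_0 in Hge; lra.
Qed.

Lemma derivable_RC_node_poly_circle (rho : R) (L : list C) :
  derivable_RC (fun th => node_poly L (circle rho th)).
Proof.
  induction L as [| y L IH]; simpl; [apply derivable_RC_const |].
  apply derivable_RC_mult; auto.
  apply derivable_RC_minus; [apply derivable_RC_circle | apply derivable_RC_const].
Qed.

Definition circle_moment (rho : R) (n : nat) (L : list C) : C :=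
  RInt (V := CR) (fun th => / (circle rho th ^ n * node_poly L (circle rho th))) 0 (2 * PI).

Lemma RtoC_2PI_neq0 : RtoC (2 * PI) <> 0.
Proof. intros E; apply RtoC_inj in E; pose proof Rgt_2PI_0; lra. Qed.

Lemma derivable_RC_moment_integrand (rho : R) (n : nat) (L : list C) :
  circle_encloses rho L ->
  derivable_RC (fun th => / (circle rho th ^ n * node_poly L (circle rho th))).
Proof.
  intros H; apply derivable_RC_inv.
  - apply derivable_RC_mult; [apply derivable_RC_pow, derivable_RC_circle |
                              apply derivable_RC_node_poly_circle].
  - intros th; apply Cmult_neq_0; [apply Cpow_nz, circle_neq0, H |
                                   now apply node_poly_circle_neq0].
Qed.

Lemma circle_moment_nil_O (rho : R) : circle_moment rho 0 [] = RtoC (2 * PI).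
Proof.
  apply (is_RInt_unique (V := CR)), (is_RInt_ext (V := CR) (fun _ => RtoC 1)).
  - intros th _; simpl; field.
  - replace (RtoC (2 * PI)) with (scal (V := CR) (2 * PI - 0)%R (RtoC 1)).
    + apply (is_RInt_const (V := CR)).
    + unfold scal; simpl; unfold prod_scal, scal; simpl; unfold mult; simpl.
      unfold RtoC; f_equal; ring.
Qed.

Lemma circle_moment_nil_S (rho : R) (n : nat) : (0 < rho)%R -> circle_moment rho (S n) [] = 0.
Proof.
  intros Hr.
  assert (HSn : RtoC (INR (S n)) <> 0).
  { intros E; apply RtoC_inj in E; rewrite S_INR in E; pose proof (pos_INR n); lra. }
  assert (HCi : Ci <> 0) by (intros E; injection E; lra).
  apply (RInt_derive_RC_periodic (fun th => / circle rho th ^ S n / (- RtoC (INR (S n)) * Ci))).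
  - intros th; eapply is_derive_RC_ext.
    + apply is_derive_RC_mult; [| apply is_derive_RC_const].
      apply (is_derive_RC_inv (fun th => circle rho th ^ S n)); [now apply Cpow_nz, circle_neq0 |].
      apply is_derive_RC_pow, is_derive_RC_circle.
    + reflexivity.
    + pose proof (circle_neq0 rho th Hr); pose proof (Cpow_nz _ n (circle_neq0 rho th Hr)).
      replace (S n - 1)%nat with n by lia; rewrite Cpow_S; unfold node_poly; cbn [fold_right].
      field; repeat split; auto.
  - apply derivable_RC_moment_integrand; split; auto.
  - now rewrite circle_2PI.
Qed.

Lemma circle_moment_cons (rho : R) (n : nat) (y : C) (L : list C) :
  circle_encloses rho (y :: L) ->
  circle_moment rho n (y :: L) = circle_moment rho (S n) L + y * circle_moment rho (S n) (y :: L).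
Proof.
  intros H; pose proof H as [Hr _]; pose proof (circle_encloses_cons _ _ _ H) as [Hy HL].
  unfold circle_moment; rewrite <- RInt_plus_Cmult by (now apply derivable_RC_moment_integrand).
  apply (RInt_ext (V := CR)); intros th _; simpl.
  pose proof (circle_neq0 rho th Hr); pose proof (Cpow_nz _ n (circle_neq0 rho th Hr)).
  pose proof (circle_sub_neq0 rho th y Hy); pose proof (node_poly_circle_neq0 rho th L HL).
  field; repeat split; auto.
Qed.

Lemma Cmod_circle_moment_le (rho : R) (n : nat) (L : list C) :
  circle_encloses rho L ->
  (Cmod (circle_moment rho n L) <= (2 * PI - 0) * / (rho ^ n * circle_gap rho L))%R.
Proof.
  intros H; pose proof (circle_gap_pos _ _ H) as Hgap; pose proof H as [Hr _].
  apply Cmod_RInt_le; [pose proof Rgt_2PI_0; lra | now apply ex_RInt_derivable_RC,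
                                                 derivable_RC_moment_integrand |].
  intros th _.
  rewrite Cmod_inv by (apply Cmult_neq_0; [apply Cpow_nz, circle_neq0 |
                                          apply node_poly_circle_neq0]; auto).
  rewrite Cmod_mult, Cmod_pow, Cmod_circle by lra.
  apply Rinv_le_contravar; [apply Rmult_lt_0_compat; auto; now apply pow_lt |].
  apply Rmult_le_compat_l; [apply pow_le; lra | now apply Cmod_node_poly_circle_ge].
Qed.

Lemma eq0_of_le_geometric (a q K : R) :
  (0 <= q < 1)%R -> (forall N, a <= q ^ N * K)%R -> (0 <= a)%R -> a = 0%R.
Proof.
  intros Hq HN Ha; destruct (Req_dec a 0) as [| Hne]; auto; exfalso.
  assert (HK : (0 < K)%R) by (specialize (HN 0%nat); simpl in HN; lra).
  destruct (pow_lt_1_zero q ltac:(rewrite Rabs_right; lra) (a / K)%R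
              ltac:(apply Rdiv_lt_0_compat; lra)) as [N HNN].
  specialize (HNN N (Nat.le_refl _)); specialize (HN N).
  rewrite Rabs_right in HNN by (apply Rle_ge, pow_le; lra).
  apply (Rmult_lt_compat_r K) in HNN; auto.
  replace (a / K * K)%R with a in HNN by (field; lra); lra.
Qed.

(* Iterating the hypothesis gives [M_n = y^N M_(n+N)], while [M_(n+N)] decays like
   [rho^-N] and [|y| < rho]. *)
Lemma circle_moment_eq0_of_shift (rho : R) (y : C) (L : list C) (n : nat) :
  circle_encloses rho (y :: L) ->
  (forall k, circle_moment rho k (y :: L) = y * circle_moment rho (S k) (y :: L)) ->
  circle_moment rho n (y :: L) = 0.
Proof.
  intros H Hshift; pose proof H as [Hr _]; pose proof (circle_encloses_cons _ _ _ H) as [Hy _].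
  pose proof (circle_gap_pos _ _ H).
  assert (Hiter : forall N k, circle_moment rho k (y :: L)
                              = y ^ N * circle_moment rho (k + N) (y :: L)).
  { induction N as [| N IHN]; intros k; [rewrite Nat.add_0_r; ring |].
    rewrite Hshift, IHN, Cpow_S; replace (S k + N)%nat with (k + S N)%nat by lia; ring. }
  apply Cmod_eq_0, (eq0_of_le_geometric _ (Cmod y / rho)
                      ((2 * PI - 0) * / (rho ^ n * circle_gap rho (y :: L)))).
  - split; [apply Rdiv_le_0_compat; [apply Cmod_ge_0 | lra] |].
    unfold Rdiv; rewrite <- (Rinv_r rho) by lra.
    apply Rmult_lt_compat_r; [apply Rinv_0_lt_compat |]; lra.
  - intros N; rewrite (Hiter N n), Cmod_mult, Cmod_pow.
    eapply Rle_trans; [apply Rmult_le_compat_l; [apply pow_le, Cmod_ge_0 |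
                                                 now apply Cmod_circle_moment_le] |].
    right; unfold Rdiv; rewrite pow_add, Rpow_mult_distr, pow_inv; field.
    split; [lra | split; apply pow_nonzero; lra].
  - apply Cmod_ge_0.
Qed.

Lemma circle_moment_cons_eq0 (rho : R) (y : C) (L : list C) (n : nat) :
  circle_encloses rho (y :: L) -> circle_moment rho n (y :: L) = 0.
Proof.
  revert y n; induction L as [| z L IH]; intros y n H;
    apply circle_moment_eq0_of_shift; auto; intros k;
    pose proof (circle_encloses_cons _ _ _ H) as [_ HL]; rewrite circle_moment_cons by auto.
  - rewrite circle_moment_nil_S by apply H; ring.
  - rewrite IH by auto; ring.
Qed.

Definition dd_integrand (rho t : R) (L : list C) (th : R) : C :=
  cexp (RtoC t * circle rho th) * circle rho th / (RtoC (2 * PI) * node_poly L (circle rho th)).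

Definition dd_circle (rho t : R) (L : list C) : C :=
  RInt (V := CR) (dd_integrand rho t L) 0 (2 * PI).

Lemma exp_dd_dd_circle (t : R) (L : list C) : exp_dd t L = dd_circle (dd_radius L) t L.
Proof. reflexivity. Qed.

Lemma derivable_RC_dd_integrand (rho t : R) (L : list C) :
  circle_encloses rho L -> derivable_RC (dd_integrand rho t L).
Proof.
  intros H; apply derivable_RC_mult.
  - apply derivable_RC_mult; [| apply derivable_RC_circle].
    apply derivable_RC_cexp, derivable_RC_mult;
      [apply derivable_RC_const | apply derivable_RC_circle].
  - apply derivable_RC_inv.
    + apply derivable_RC_mult; [apply derivable_RC_const | apply derivable_RC_node_poly_circle].
    + intros th; apply Cmult_neq_0; [apply RtoC_2PI_neq0 | now apply node_poly_circle_neq0].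
Qed.

Lemma dd_circle_nil (rho t : R) : (0 < rho)%R -> dd_circle rho t [] = 0.
Proof.
  intros Hr; assert (HCi : Ci <> 0) by (intros E; injection E; lra).
  pose proof RtoC_2PI_neq0.
  assert (Hd : derivable_RC (dd_integrand rho t []))
    by (apply derivable_RC_dd_integrand; now split).
  destruct (Req_dec t 0) as [-> | Ht].
  - apply (RInt_derive_RC_periodic (fun th => circle rho th / (Ci * RtoC (2 * PI)))); auto.
    + intros th; eapply is_derive_RC_ext;
        [apply is_derive_RC_mult; [apply is_derive_RC_circle | apply is_derive_RC_const] |
         reflexivity |].
      unfold dd_integrand, node_poly; cbn [fold_right].
      replace (RtoC 0 * circle rho th) with (RtoC 0) by ring; rewrite cexp_0.
      field; auto.
    + now rewrite circle_2PI.
  - assert (Ht' : RtoC t <> 0) by (intros E; apply RtoC_inj in E; lra).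
    apply (RInt_derive_RC_periodic
             (fun th => cexp (RtoC t * circle rho th) / (RtoC t * Ci * RtoC (2 * PI)))); auto.
    + intros th; eapply is_derive_RC_ext;
        [apply is_derive_RC_mult;
           [apply is_derive_RC_cexp, is_derive_RC_mult;
              [apply is_derive_RC_const | apply is_derive_RC_circle] |
            apply is_derive_RC_const] |
         reflexivity |].
      unfold dd_integrand, node_poly; cbn [fold_right]; field; auto.
    + now rewrite circle_2PI.
Qed.

Lemma dd_circle_0_cons (rho : R) (y : C) (L : list C) :
  circle_encloses rho (y :: L) ->
  dd_circle rho 0 (y :: L)
  = / RtoC (2 * PI) * (circle_moment rho 0 L + y * circle_moment rho 0 (y :: L)).
Proof.
  intros H; pose proof H as [Hr _]; pose proof (circle_encloses_cons _ _ _ H) as [Hy HL].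
  unfold circle_moment; rewrite <- RInt_plus_Cmult by (now apply derivable_RC_moment_integrand).
  apply (is_RInt_unique (V := CR)), (is_RInt_ext (V := CR) (fun th =>
    / RtoC (2 * PI) * (/ (circle rho th ^ 0 * node_poly L (circle rho th))
                       + y * / (circle rho th ^ 0 * node_poly (y :: L) (circle rho th))))).
  - intros th _; unfold dd_integrand; simpl.
    replace (RtoC 0 * circle rho th) with (RtoC 0) by ring; rewrite cexp_0.
    pose proof (circle_sub_neq0 rho th y Hy); pose proof (node_poly_circle_neq0 rho th L HL).
    pose proof RtoC_2PI_neq0; field; repeat split; auto.
  - apply is_RInt_Cmult_l, RInt_correct, ex_RInt_derivable_RC, derivable_RC_plus.
    + now apply derivable_RC_moment_integrand.
    + apply derivable_RC_mult; [apply derivable_RC_const | now apply derivable_RC_moment_integrand].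
Qed.

Lemma dd_circle_at_0 (rho : R) (L : list C) :
  circle_encloses rho L -> dd_circle rho 0 L = if (length L =? 1)%nat then 1 else 0.
Proof.
  intros H; destruct L as [| y L]; [apply dd_circle_nil, H |].
  rewrite dd_circle_0_cons, (circle_moment_cons_eq0 rho y L) by auto.
  destruct L as [| z L]; simpl.
  - rewrite circle_moment_nil_O; field; apply RtoC_2PI_neq0.
  - rewrite circle_moment_cons_eq0 by apply (circle_encloses_cons _ _ _ H); ring.
Qed.

Lemma dd_integrand_shift (rho t h : R) (L : list C) (th : R) :
  dd_integrand rho (t + h) L th = cexp (RtoC h * circle rho th) * dd_integrand rho t L th.
Proof.
  unfold dd_integrand, Cdiv; rewrite RtoC_plus.
  replace ((RtoC t + RtoC h) * circle rho th)
    with (RtoC t * circle rho th + RtoC h * circle rho th) by ring.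
  rewrite <- cexp_add; ring.
Qed.

Lemma Cmod_dd_integrand_le (rho t : R) (L : list C) (th : R) :
  circle_encloses rho L ->
  (Cmod (dd_integrand rho t L th) <= exp (Rabs t * rho) * rho / (2 * PI * circle_gap rho L))%R.
Proof.
  intros H; pose proof (circle_gap_pos _ _ H) as Hgap; pose proof Rgt_2PI_0.
  pose proof (Cmod_node_poly_circle_ge rho th L H); pose proof H as [Hr _].
  unfold dd_integrand.
  rewrite Cmod_div by (apply Cmult_neq_0; [apply RtoC_2PI_neq0 | now apply node_poly_circle_neq0]).
  rewrite !Cmod_mult, Cmod_R, Cmod_circle, Rabs_right by lra.
  apply Rmult_le_compat.
  - apply Rmult_le_pos; [apply Cmod_ge_0 | lra].
  - left; apply Rinv_0_lt_compat, Rmult_lt_0_compat; lra.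
  - apply Rmult_le_compat_r; [lra |].
    eapply Rle_trans; [apply Cmod_cexp_le |].
    now rewrite Cmod_mult, Cmod_R, Cmod_circle by lra.
  - apply Rinv_le_contravar; [apply Rmult_lt_0_compat; lra | apply Rmult_le_compat_l; lra].
Qed.

Lemma Cmod_dd_integrand_remainder_le (rho t h : R) (L : list C) (th : R) :
  circle_encloses rho L -> (Rabs h <= 1)%R ->
  (Cmod ((cexp (RtoC h * circle rho th) - 1 - RtoC h * circle rho th) * dd_integrand rho t L th)
   <= h * h * (rho ^ 2 * exp rho * (exp (Rabs t * rho) * rho / (2 * PI * circle_gap rho L))))%R.
Proof.
  intros H Hh; pose proof H as [Hr _].
  assert (Hw : Cmod (RtoC h * circle rho th) = (Rabs h * rho)%R)
    by (rewrite Cmod_mult, Cmod_R, Cmod_circle; lra).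
  pose proof (Cmod_cexp_sub_le (RtoC h * circle rho th)) as Ht; rewrite Hw in Ht.
  rewrite Cmod_mult, <- Rmult_assoc.
  apply Rmult_le_compat; try apply Cmod_ge_0; [| now apply Cmod_dd_integrand_le].
  eapply Rle_trans; [exact Ht |].
  replace ((Rabs h * rho) ^ 2)%R with (h * h * rho ^ 2)%R
    by (rewrite Rpow_mult_distr, pow2_abs; ring).
  rewrite <- Rmult_assoc; apply Rmult_le_compat_l;
    [apply Rmult_le_pos; [nra | apply pow_le; lra] |].
  destruct (Rle_lt_or_eq_dec (Rabs h * rho) rho) as [Hlt | ->];
    [pose proof (Rabs_pos h); nra | left; now apply exp_increasing | apply Rle_refl].
Qed.

Lemma dd_circle_remainder (rho t h : R) (L : list C) :
  circle_encloses rho L ->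
  dd_circle rho (t + h) L - dd_circle rho t L
    - RtoC h * RInt (V := CR) (fun th => circle rho th * dd_integrand rho t L th) 0 (2 * PI)
  = RInt (V := CR) (fun th => (cexp (RtoC h * circle rho th) - 1 - RtoC h * circle rho th)
                              * dd_integrand rho t L th) 0 (2 * PI).
Proof.
  intros H.
  assert (HG : forall t, derivable_RC (dd_integrand rho t L))
    by (intros; now apply derivable_RC_dd_integrand).
  assert (HwG : derivable_RC (fun th => circle rho th * dd_integrand rho t L th))
    by (apply derivable_RC_mult; auto; apply derivable_RC_circle).
  assert (Hsum : derivable_RC (fun th => dd_integrand rho t L th
                                        + RtoC h * (circle rho th * dd_integrand rho t L th)))
    by (apply derivable_RC_plus; auto; apply derivable_RC_mult; auto; apply derivable_RC_const).
  symmetry; transitivity (RInt (V := CR) (fun th => dd_integrand rho (t + h) L th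
    + (-1) * (dd_integrand rho t L th + RtoC h * (circle rho th * dd_integrand rho t L th)))
    0 (2 * PI)).
  - apply (RInt_ext (V := CR)); intros th _.
    match goal with |- ?a = ?b => change (@eq C a b) end.
    rewrite dd_integrand_shift; ring.
  - unfold dd_circle; rewrite !RInt_plus_Cmult; auto.
    match goal with |- ?a = ?b => change (@eq C a b) end; ring.
Qed.

(* Differentiation under the integral sign, justified by the uniform bound
   [|e^(hw) - 1 - hw| <= |hw|^2 e^|hw|] on the circle. *)
Lemma is_derive_dd_circle (rho t : R) (L : list C) :
  circle_encloses rho L ->
  is_derive_RC (fun t => dd_circle rho t L) t
    (RInt (V := CR) (fun th => circle rho th * dd_integrand rho t L th) 0 (2 * PI)).
Proof.
  intros H; pose proof (circle_gap_pos _ _ H); pose proof Rgt_2PI_0; pose proof H as [Hr _].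
  set (B := (rho ^ 2 * exp rho * (exp (Rabs t * rho) * rho / (2 * PI * circle_gap rho L)))%R).
  assert (HB : (0 <= B)%R).
  { pose proof (exp_pos rho); pose proof (exp_pos (Rabs t * rho)); pose proof (pow_le rho 2).
    assert (0 < / (2 * PI * circle_gap rho L))%R
      by (apply Rinv_0_lt_compat, Rmult_lt_0_compat; lra).
    unfold B, Rdiv; apply Rmult_le_pos; apply Rmult_le_pos; try apply Rmult_le_pos; nra. }
  apply (is_derive_RC_of_remainder_le _ t _ ((2 * PI - 0) * B)); [apply Rmult_le_pos; lra |].
  intros h Hh; rewrite dd_circle_remainder by auto.
  replace ((2 * PI - 0) * B * (h * h))%R with ((2 * PI - 0) * (h * h * B))%R by ring.
  apply Cmod_RInt_le; [lra | apply ex_RInt_derivable_RC |].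
  - apply derivable_RC_mult; [| now apply derivable_RC_dd_integrand].
    assert (Hhw : derivable_RC (fun th => RtoC h * circle rho th))
      by (apply derivable_RC_mult; [apply derivable_RC_const | apply derivable_RC_circle]).
    apply derivable_RC_minus; auto; apply derivable_RC_minus; [| apply derivable_RC_const].
    now apply derivable_RC_cexp.
  - intros th _; unfold B; apply Cmod_dd_integrand_remainder_le; auto.
Qed.

Lemma RInt_circle_mul_dd_integrand_cons (rho t : R) (y : C) (L : list C) :
  circle_encloses rho (y :: L) ->
  RInt (V := CR) (fun th => circle rho th * dd_integrand rho t (y :: L) th) 0 (2 * PI)
  = dd_circle rho t L + y * dd_circle rho t (y :: L).
Proof.
  intros H; pose proof (circle_encloses_cons _ _ _ H) as [Hy HL].
  unfold dd_circle; rewrite <- RInt_plus_Cmult by now apply derivable_RC_dd_integrand.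
  apply (RInt_ext (V := CR)); intros th _; unfold dd_integrand; simpl.
  pose proof (circle_sub_neq0 rho th y Hy); pose proof (node_poly_circle_neq0 rho th L HL).
  pose proof RtoC_2PI_neq0; field; repeat split; auto.
Qed.

Lemma is_derive_dd_circle_cons (rho t : R) (y : C) (L : list C) :
  circle_encloses rho (y :: L) ->
  is_derive_RC (fun t => dd_circle rho t (y :: L)) t
    (y * dd_circle rho t (y :: L) + dd_circle rho t L).
Proof.
  intros H; eapply is_derive_RC_ext; [apply (is_derive_dd_circle rho t (y :: L) H) | reflexivity |].
  rewrite RInt_circle_mul_dd_integrand_cons by auto; ring.
Qed.

Lemma dd_circle_radius_indep (L : list C) (rho rho' t : R) :
  circle_encloses rho L -> circle_encloses rho' L -> dd_circle rho t L = dd_circle rho' t L.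
Proof.
  revert rho rho' t; induction L as [| y L IH]; intros rho rho' t H H'.
  - rewrite !dd_circle_nil; [reflexivity | apply H' | apply H].
  - pose proof (proj2 (circle_encloses_cons _ _ _ H)) as HL.
    pose proof (proj2 (circle_encloses_cons _ _ _ H')) as HL'.
    apply (linear_ode_unique (fun s => dd_circle rho s (y :: L))
                             (fun s => dd_circle rho' s (y :: L))
             (fun s => dd_circle rho s L) y).
    + intros s; now apply is_derive_dd_circle_cons.
    + intros s; rewrite (IH rho rho' s HL HL'); now apply is_derive_dd_circle_cons.
    + now rewrite !dd_circle_at_0.
Qed.

(** * Exponential divided differences *)

Lemma dd_radius_encloses (L : list C) : circle_encloses (dd_radius L) L.
Proof.
  assert (Hsum : forall L, (0 <= fold_right (fun y acc => Cmod y + acc) 0 L)%R).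
  { induction L0 as [| y L0 IH]; simpl; [lra | pose proof (Cmod_ge_0 y); lra]. }
  unfold dd_radius; split; [pose proof (Hsum L); lra |].
  induction L as [| y L IH]; simpl; constructor.
  - pose proof (Hsum L); lra.
  - eapply Forall_impl; [| exact IH]; intros z Hz; simpl in Hz; pose proof (Cmod_ge_0 y); lra.
Qed.

Lemma exp_dd_nil (t : R) : exp_dd t [] = 0.
Proof. rewrite exp_dd_dd_circle; apply dd_circle_nil, dd_radius_encloses. Qed.

Lemma exp_dd_at_0 (L : list C) : exp_dd 0 L = if (length L =? 1)%nat then 1 else 0.
Proof. rewrite exp_dd_dd_circle; apply dd_circle_at_0, dd_radius_encloses. Qed.

Lemma is_derive_exp_dd_cons (t : R) (y : C) (L : list C) :
  is_derive_RC (fun t => exp_dd t (y :: L)) t (y * exp_dd t (y :: L) + exp_dd t L).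
Proof.
  pose proof (dd_radius_encloses (y :: L)) as H.
  eapply is_derive_RC_ext; [apply (is_derive_dd_circle_cons _ t y L H) |
                            intros u; symmetry; apply exp_dd_dd_circle |].
  rewrite !exp_dd_dd_circle, (dd_circle_radius_indep L (dd_radius L) (dd_radius (y :: L)));
    [reflexivity | apply dd_radius_encloses | apply (circle_encloses_cons _ _ _ H)].
Qed.

Lemma is_derive_exp_dd_opp_cons (s : R) (y : C) (L : list C) :
  is_derive_RC (fun s => exp_dd (- s) (y :: L)) s
    (- (y * exp_dd (- s) (y :: L) + exp_dd (- s) L)).
Proof. apply (is_derive_RC_comp_opp (fun t => exp_dd t (y :: L))), is_derive_exp_dd_cons. Qed.

Lemma node_poly_perm (L L' : list C) (z : C) : Permutation L L' -> node_poly L z = node_poly L' z.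
Proof. intros P; induction P; simpl; congruence || ring. Qed.

Lemma exp_dd_perm (t : R) (L L' : list C) : Permutation L L' -> exp_dd t L = exp_dd t L'.
Proof.
  intros P; rewrite !exp_dd_dd_circle.
  rewrite (dd_circle_radius_indep L' (dd_radius L') (dd_radius L)).
  - apply (RInt_ext (V := CR)); intros th _; unfold dd_integrand; now rewrite (node_poly_perm L L').
  - apply dd_radius_encloses.
  - destruct (dd_radius_encloses L) as [Hr HL]; split; auto; eapply Permutation_Forall; eauto.
Qed.

Lemma derivable_exp_dd (L : list C) (c : R) : derivable_RC (fun t => exp_dd (c * t)%R L).
Proof.
  intros t; destruct L as [| y L].
  - exists 0; eapply is_derive_RC_ext; [apply (is_derive_RC_const 0) | | reflexivity].
    intros u; now rewrite exp_dd_nil.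
  - eexists; eapply is_derive_RC_ext;
      [apply (is_derive_RC_comp_affine (fun t => exp_dd t (y :: L)) c 0), is_derive_exp_dd_cons |
       intros u; cbv beta; now rewrite Rplus_0_r | reflexivity].
Qed.

Definition Csum (f : nat -> C) (n m : nat) : C := sum_n_m (G := C_AbelianMonoid) f n m.

Lemma Csum_plus (f g : nat -> C) (n m : nat) :
  Csum (fun k => f k + g k) n m = Csum f n m + Csum g n m.
Proof. exact (sum_n_m_plus f g n m). Qed.

Lemma Csum_mult_l (c : C) (f : nat -> C) (n m : nat) :
  Csum (fun k => c * f k) n m = c * Csum f n m.
Proof. exact (sum_n_m_mult_l (K := C_Ring) c f n m). Qed.

Lemma Csum_mult_r (c : C) (f : nat -> C) (n m : nat) :
  Csum (fun k => f k * c) n m = Csum f n m * c.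
Proof. exact (sum_n_m_mult_r (K := C_Ring) c f n m). Qed.

Lemma Csum_n_n (f : nat -> C) (n : nat) : Csum f n n = f n.
Proof. exact (sum_n_n f n). Qed.

Lemma Csum_first (f : nat -> C) (n m : nat) : (n <= m)%nat -> Csum f n m = f n + Csum f (S n) m.
Proof. exact (sum_Sn_m f n m). Qed.

Lemma Csum_last (f : nat -> C) (n m : nat) :
  (n <= S m)%nat -> Csum f n (S m) = Csum f n m + f (S m).
Proof. exact (sum_n_Sm f n m). Qed.

Lemma Csum_empty (f : nat -> C) (n m : nat) : (m < n)%nat -> Csum f n m = RtoC 0.
Proof. exact (sum_n_m_zero f n m). Qed.

Lemma Csum_ext (f g : nat -> C) (n m : nat) :
  (forall k, (n <= k <= m)%nat -> f k = g k) -> Csum f n m = Csum g n m.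
Proof. exact (sum_n_m_ext_loc f g n m). Qed.

Lemma Csum_eq0 (f : nat -> C) (n m : nat) :
  (forall k, (n <= k <= m)%nat -> f k = 0) -> Csum f n m = RtoC 0.
Proof.
  intros H; rewrite (Csum_ext f (fun _ => RtoC 0)) by auto.
  exact (sum_n_m_const_zero n m).
Qed.

Lemma Csum_exchange_triangle (f : nat -> nat -> C) (j : nat) :
  Csum (fun r => Csum (f r) r j) 0 j = Csum (fun k => Csum (fun r => f r k) 0 k) 0 j.
Proof.
  induction j as [| j IH]; [reflexivity |].
  rewrite !(Csum_last _ 0 j) by lia; rewrite <- IH.
  rewrite (Csum_ext (fun r => Csum (f r) r (S j)) (fun r => Csum (f r) r j + f r (S j)))
    by (intros; apply Csum_last; lia).
  rewrite Csum_plus, Csum_n_n; ring.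
Qed.

Lemma is_derive_RC_Csum (f : nat -> R -> C) (l : nat -> C) (t : R) (n m : nat) :
  (forall k, (n <= k <= m)%nat -> is_derive_RC (f k) t (l k)) ->
  is_derive_RC (fun u => Csum (fun k => f k u) n m) t (Csum l n m).
Proof.
  induction m as [| m IH]; intros H.
  - destruct n as [| n].
    + eapply is_derive_RC_ext; [apply (H 0%nat); lia | |]; intros; now rewrite Csum_n_n.
    + eapply is_derive_RC_ext; [apply (is_derive_RC_const 0) | |];
        intros; rewrite Csum_empty; auto; lia.
  - destruct (Nat.le_gt_cases n (S m)) as [Hle | Hlt].
    + eapply is_derive_RC_ext;
        [apply is_derive_RC_plus; [apply IH; intros; apply H; lia | apply (H (S m)); lia] | |];
        intros; rewrite Csum_last; auto.
    + eapply is_derive_RC_ext; [apply (is_derive_RC_const 0) | |];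
        intros; rewrite Csum_empty; auto; lia.
Qed.

Lemma is_RInt_Csum (g : nat -> R -> C) (I : nat -> C) (a b : R) (n m : nat) :
  (forall k, (n <= k <= m)%nat -> is_RInt (V := CR) (g k) a b (I k)) ->
  is_RInt (V := CR) (fun t => Csum (fun k => g k t) n m) a b (Csum I n m).
Proof.
  intros H; induction m as [| m IH].
  - destruct n as [| n].
    + rewrite Csum_n_n; apply (is_RInt_ext (V := CR) (g 0%nat)); [intros; now rewrite Csum_n_n |].
      apply H; lia.
    + rewrite Csum_empty by lia.
      apply (is_RInt_ext (V := CR) (fun _ => zero)); [intros; rewrite Csum_empty; auto; lia |].
      replace (RtoC 0) with (scal (V := CR) (b - a)%R zero) by exact (scal_zero_r _).
      apply (is_RInt_const (V := CR)).
  - destruct (Nat.le_gt_cases n (S m)) as [Hle | Hlt].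
    + rewrite Csum_last by lia.
      apply (is_RInt_ext (V := CR) (fun t => Csum (fun k => g k t) n m + g (S m) t));
        [intros; rewrite Csum_last; auto |].
      apply (is_RInt_plus (V := CR)); [apply IH; intros; apply H | apply H]; lia.
    + rewrite Csum_empty by lia.
      apply (is_RInt_ext (V := CR) (fun _ => zero)); [intros; rewrite Csum_empty; auto; lia |].
      replace (RtoC 0) with (scal (V := CR) (b - a)%R zero) by exact (scal_zero_r _).
      apply (is_RInt_const (V := CR)).
Qed.

Lemma pts_cons (x : nat -> C) (a b : nat) : (a <= b)%nat -> pts x a b = x a :: pts x (S a) b.
Proof.
  intros H; unfold pts; replace (S b - a)%nat with (S (S b - S a)) by lia; reflexivity.
Qed.

Lemma pts_empty (x : nat -> C) (b : nat) : pts x (S b) b = [].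
Proof. unfold pts; now rewrite Nat.sub_diag. Qed.

Lemma length_pts (x : nat -> C) (a b : nat) : length (pts x a b) = (S b - a)%nat.
Proof. unfold pts; now rewrite length_map, length_seq. Qed.

Section Nodes.

Variable x : nat -> C.

Lemma exp_dd_pts_at_0 (a b : nat) :
  (a <= b)%nat -> exp_dd 0 (pts x a b) = if (a =? b)%nat then 1 else 0.
Proof.
  intros H; rewrite exp_dd_at_0, length_pts.
  destruct (Nat.eqb_spec a b), (Nat.eqb_spec (S b - a) 1); auto; lia.
Qed.

Lemma exp_dd_pts_app_at_0 (a b : nat) (z : C) : (a <= b)%nat -> exp_dd 0 (pts x a b ++ [z]) = 0.
Proof.
  intros H; rewrite exp_dd_at_0, length_app, length_pts; change (length [z]) with 1%nat.
  destruct (Nat.eqb_spec (S b - a + 1) 1); [lia | reflexivity].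
Qed.

Lemma is_derive_exp_dd_pts (a b : nat) (t : R) : (a <= b)%nat ->
  is_derive_RC (fun t => exp_dd t (pts x a b)) t
    (x a * exp_dd t (pts x a b) + exp_dd t (pts x (S a) b)).
Proof. intros H; rewrite (pts_cons x a b H); apply is_derive_exp_dd_cons. Qed.

Lemma is_derive_exp_dd_opp_pts (a b : nat) (s : R) : (a <= b)%nat ->
  is_derive_RC (fun s => exp_dd (- s) (pts x a b)) s
    (- (x a * exp_dd (- s) (pts x a b) + exp_dd (- s) (pts x (S a) b))).
Proof. intros H; rewrite (pts_cons x a b H); apply is_derive_exp_dd_opp_cons. Qed.

(* Leibniz rule for the divided differences of [e^(t1 + t2) = e^t1 e^t2]. *)
Lemma exp_dd_add (a b : nat) (t1 t2 : R) : (a <= S b)%nat ->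
  exp_dd (t1 + t2) (pts x a b)
  = Csum (fun k => exp_dd t1 (pts x a k) * exp_dd t2 (pts x k b)) a b.
Proof.
  remember (S b - a)%nat as n eqn:Hn; revert a t1 Hn; induction n as [| n IH]; intros a t1 Hn Hab.
  { replace a with (S b) by lia; rewrite pts_empty, exp_dd_nil, Csum_empty by lia; reflexivity. }
  revert t1; apply (linear_ode_unique _ _ (fun t1 => exp_dd (t1 + t2) (pts x (S a) b)) (x a)).
  - intros t1; eapply is_derive_RC_ext.
    + apply (is_derive_RC_comp_affine (fun t => exp_dd t (pts x a b)) 1 t2).
      apply is_derive_exp_dd_pts; lia.
    + intros u; cbv beta; now rewrite Rmult_1_l.
    + rewrite Rmult_1_l; ring.
  - intros t1; eapply is_derive_RC_ext.
    + eapply (is_derive_RC_Csum (fun k t => exp_dd t (pts x a k) * exp_dd t2 (pts x k b)) _ t1 a b).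
      intros k Hk; apply (is_derive_RC_mult (fun t => exp_dd t (pts x a k)));
        [| apply is_derive_RC_const].
      apply is_derive_exp_dd_pts; lia.
    + reflexivity.
    + rewrite (Csum_ext _ (fun k => x a * (exp_dd t1 (pts x a k) * exp_dd t2 (pts x k b))
                                  + exp_dd t1 (pts x (S a) k) * exp_dd t2 (pts x k b)))
        by (intros; ring).
      rewrite Csum_plus, Csum_mult_l,
        (Csum_first (fun k => exp_dd t1 (pts x (S a) k) * exp_dd t2 (pts x k b))) by lia.
      rewrite pts_empty, exp_dd_nil, <- (IH (S a)) by lia; ring.
  - rewrite Rplus_0_l, Csum_first, Csum_eq0 by
      (lia || (intros k Hk; rewrite exp_dd_pts_at_0 by lia;
               destruct (Nat.eqb_spec a k); [lia | ring])).
    rewrite exp_dd_pts_at_0, Nat.eqb_refl by lia; ring.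
Qed.

(* For [f(x) = e^(tx)] this is [f'[x_a..x_b] = sum_m f[x_a..x_b,x_m]], since [f' = t f]. *)
Lemma exp_dd_mul_t (a b : nat) (t : R) : (a <= S b)%nat ->
  RtoC t * exp_dd t (pts x a b) = Csum (fun m => exp_dd t (pts x a b ++ [x m])) a b.
Proof.
  remember (S b - a)%nat as n eqn:Hn; revert a t Hn; induction n as [| n IH]; intros a t Hn Hab.
  { replace a with (S b) by lia; rewrite pts_empty, exp_dd_nil, Csum_empty by lia; ring. }
  revert t; apply (linear_ode_unique _ _
    (fun t => exp_dd t (pts x a b) + RtoC t * exp_dd t (pts x (S a) b)) (x a)).
  - intros t; eapply is_derive_RC_ext;
      [apply (is_derive_RC_mult RtoC (fun t => exp_dd t (pts x a b)));
         [apply is_derive_RC_id | apply is_derive_exp_dd_pts; lia] |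
       reflexivity | ring].
  - intros t; eapply is_derive_RC_ext.
    + eapply (is_derive_RC_Csum (fun m t => exp_dd t (x a :: pts x (S a) b ++ [x m])) _ t a b).
      intros m Hm; apply is_derive_exp_dd_cons.
    + intros u; apply Csum_ext; intros m Hm; now rewrite (pts_cons x a b) by lia.
    + rewrite (Csum_ext _ (fun m => x a * exp_dd t (pts x a b ++ [x m])
                                  + exp_dd t (pts x (S a) b ++ [x m])))
        by (intros m Hm; now rewrite (pts_cons x a b) by lia).
      rewrite Csum_plus, Csum_mult_l,
        (Csum_first (fun m => exp_dd t (pts x (S a) b ++ [x m]))) by lia.
      rewrite <- (IH (S a)) by lia.
      rewrite (exp_dd_perm t (pts x (S a) b ++ [x a]) (pts x a b)); [ring |].
      rewrite (pts_cons x a b) by lia; apply Permutation_sym, Permutation_cons_append.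
  - rewrite Csum_eq0 by (intros m Hm; apply exp_dd_pts_app_at_0; lia); ring.
Qed.

End Nodes.

(** * The fidelity integral *)

Section FidelityIntegral.

Variables (x : nat -> C) (j q : nat).
Hypothesis Hjq : (j < q)%nat.

Definition kernel_integrand (k : nat) (tau : R) : C :=
  RtoC tau * (exp_dd (- tau) (pts x (S j) q) * exp_dd tau (pts x k j)).

Definition kernel (k : nat) (s : R) : C := RInt (V := CR) (kernel_integrand k) 0 s.

Definition tail_sum (r : nat) (s : R) : C :=
  Csum (fun m => exp_dd (- s) (pts x r q ++ [x m])) (S j) q.

Definition kernel_sum (r : nat) (s : R) : C :=
  Csum (fun k => exp_dd (- s) (pts x r k) * kernel k s) r j.

Lemma derivable_kernel_integrand (k : nat) : derivable_RC (kernel_integrand k).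
Proof.
  apply derivable_RC_mult; [apply derivable_RC_id | apply derivable_RC_mult].
  - apply (derivable_RC_ext (fun t => exp_dd (-1 * t)%R (pts x (S j) q)));
      [apply derivable_exp_dd |].
    intros t; now replace (-1 * t)%R with (- t)%R by ring.
  - apply (derivable_RC_ext (fun t => exp_dd (1 * t)%R (pts x k j))); [apply derivable_exp_dd |].
    intros t; now rewrite Rmult_1_l.
Qed.

Lemma is_derive_tail_sum (r : nat) (s : R) : (r <= j)%nat ->
  is_derive_RC (tail_sum r) s (- (x r * tail_sum r s + tail_sum (S r) s)).
Proof.
  intros Hr; eapply is_derive_RC_ext.
  - eapply (is_derive_RC_Csum (fun m s => exp_dd (- s) (x r :: pts x (S r) q ++ [x m]))
              _ s (S j) q).
    intros m Hm; apply is_derive_exp_dd_opp_cons.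
  - intros u; unfold tail_sum; now rewrite (pts_cons x r q) by lia.
  - unfold tail_sum; rewrite (pts_cons x r q) by lia; cbn [app].
    rewrite (Csum_ext _ (fun m => -1 * (x r * exp_dd (- s) (x r :: pts x (S r) q ++ [x m]))
                                  + -1 * exp_dd (- s) (pts x (S r) q ++ [x m]))) by (intros; ring).
    rewrite Csum_plus, !Csum_mult_l; ring.
Qed.

Lemma is_derive_kernel_sum (r : nat) (s : R) : (r <= j)%nat ->
  is_derive_RC (kernel_sum r) s
    (- (x r * kernel_sum r s + kernel_sum (S r) s)
     + (if (r =? j)%nat then RtoC s * exp_dd (- s) (pts x (S j) q) else 0)).
Proof.
  intros Hr; eapply is_derive_RC_ext.
  - eapply (is_derive_RC_Csum (fun k s => exp_dd (- s) (pts x r k) * kernel k s) _ s r j).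
    intros k Hk; apply is_derive_RC_mult;
      [apply is_derive_exp_dd_opp_pts; lia | apply is_derive_RC_RInt, derivable_kernel_integrand].
  - reflexivity.
  - rewrite (Csum_ext _ (fun k => -1 * (x r * (exp_dd (- s) (pts x r k) * kernel k s))
        + (-1 * (exp_dd (- s) (pts x (S r) k) * kernel k s)
           + RtoC s * exp_dd (- s) (pts x (S j) q)
             * (exp_dd (- s) (pts x r k) * exp_dd s (pts x k j)))))
      by (intros; unfold kernel_integrand; ring).
    rewrite !Csum_plus, !Csum_mult_l.
    rewrite (Csum_first (fun k => exp_dd (- s) (pts x (S r) k) * kernel k s)) by lia.
    rewrite pts_empty, exp_dd_nil, <- exp_dd_add by lia.
    replace (- s + s)%R with 0%R by ring; rewrite exp_dd_pts_at_0 by lia.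
    unfold kernel_sum; destruct (Nat.eqb_spec r j); ring.
Qed.

Lemma tail_sum_last (s : R) : tail_sum (S j) s = - (RtoC s * exp_dd (- s) (pts x (S j) q)).
Proof. unfold tail_sum; rewrite <- exp_dd_mul_t by lia; rewrite RtoC_opp; ring. Qed.

(* Both sides solve [f' = - x_r f - tail_sum (S r)] and vanish at [s = 0]. *)
Lemma tail_sum_eq_kernel_sum_step (r : nat) : (r <= j)%nat ->
  (forall s, tail_sum (S r) s = kernel_sum (S r) s
             - (if (r =? j)%nat then RtoC s * exp_dd (- s) (pts x (S j) q) else 0)) ->
  forall s, tail_sum r s = kernel_sum r s.
Proof.
  intros Hr Hnext; apply (linear_ode_unique _ _ (fun s => - tail_sum (S r) s) (- x r)).
  - intros s; eapply is_derive_RC_ext; [apply (is_derive_tail_sum r s Hr) | reflexivity | ring].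
  - intros s; eapply is_derive_RC_ext; [apply (is_derive_kernel_sum r s Hr) | reflexivity |].
    rewrite Hnext; ring.
  - unfold tail_sum, kernel_sum, kernel; rewrite Ropp_0.
    rewrite Csum_eq0 by (intros m Hm; apply exp_dd_pts_app_at_0; lia).
    rewrite Csum_eq0 by (intros k Hk; rewrite RInt_point; exact (Cmult_0_r _)); reflexivity.
Qed.

Lemma tail_sum_eq_kernel_sum (r : nat) (s : R) : (r <= j)%nat -> tail_sum r s = kernel_sum r s.
Proof.
  remember (j - r)%nat as n eqn:Hn; revert r s Hn; induction n as [| n IH]; intros r s Hn Hr;
    revert s; apply tail_sum_eq_kernel_sum_step; auto; intros s.
  - replace r with j by lia; rewrite Nat.eqb_refl, tail_sum_last.
    unfold kernel_sum; rewrite Csum_empty by lia; ring.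
  - rewrite (IH (S r)) by lia; destruct (Nat.eqb_spec r j); [lia | ring].
Qed.

Lemma Csum_tail_sum (s : R) :
  Csum (fun r => exp_dd (- s) (pts x 0 r) * tail_sum r s) 0 j
  = Csum (fun k => exp_dd (- (s + s)) (pts x 0 k) * kernel k s) 0 j.
Proof.
  rewrite (Csum_ext _ (fun r => Csum (fun k => exp_dd (- s) (pts x 0 r)
                                       * (exp_dd (- s) (pts x r k) * kernel k s)) r j))
    by (intros r Hr; rewrite tail_sum_eq_kernel_sum by lia; unfold kernel_sum;
        now rewrite Csum_mult_l).
  rewrite (Csum_exchange_triangle (fun r k => exp_dd (- s) (pts x 0 r)
                                              * (exp_dd (- s) (pts x r k) * kernel k s))).
  apply Csum_ext; intros k Hk.
  rewrite (Csum_ext _ (fun r => exp_dd (- s) (pts x 0 r) * exp_dd (- s) (pts x r k) * kernel k s))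
    by (intros; ring).
  rewrite Csum_mult_r, <- exp_dd_add by lia.
  now replace (- s + - s)%R with (- (s + s))%R by ring.
Qed.

Lemma kernel_integrand_expansion (beta tau : R) :
  RtoC tau * (exp_dd (- tau) (pts x (S j) q) * exp_dd (- (beta - tau)) (pts x 0 j))
  = Csum (fun k => exp_dd (- beta) (pts x 0 k) * kernel_integrand k tau) 0 j.
Proof.
  replace (- (beta - tau))%R with (- beta + tau)%R by ring; rewrite exp_dd_add by lia.
  rewrite (Csum_ext (fun k => exp_dd (- beta) (pts x 0 k) * kernel_integrand k tau)
                    (fun k => RtoC tau * exp_dd (- tau) (pts x (S j) q)
                                * (exp_dd (- beta) (pts x 0 k) * exp_dd tau (pts x k j))))
    by (intros; unfold kernel_integrand; ring).
  rewrite Csum_mult_l; ring.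
Qed.

Lemma is_RInt_fidelity (beta : R) :
  is_RInt (V := CR)
    (fun tau => RtoC tau * (exp_dd (- tau) (pts x (S j) q) * exp_dd (- (beta - tau)) (pts x 0 j)))
    0 (beta / 2)
    (Csum (fun r => exp_dd (- (beta / 2)) (pts x 0 r) * tail_sum r (beta / 2)) 0 j).
Proof.
  rewrite Csum_tail_sum; replace (beta / 2 + beta / 2)%R with beta by field.
  apply (is_RInt_ext (V := CR) (fun tau => Csum (fun k => exp_dd (- beta) (pts x 0 k)
                                                       * kernel_integrand k tau) 0 j)).
  - intros tau _; symmetry; apply kernel_integrand_expansion.
  - apply is_RInt_Csum; intros k _.
    apply is_RInt_Cmult_l, (RInt_correct (V := CR)), ex_RInt_derivable_RC,
      derivable_kernel_integrand.
Qed.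

End FidelityIntegral.

Close Scope C_scope.

Theorem lemma3 (x : nat -> C) (q j : nat) (beta : R) :
  (1 <= q)%nat -> (j <= q - 1)%nat -> 0 < beta ->
  is_RInt (V := C_R_CompleteNormedModule)
    (fun tau : R =>
       Cmult (RtoC tau)
         (Cmult (exp_dd (- tau) (pts x (S j) q))
                (exp_dd (- (beta - tau)) (pts x 0 j))))
    0 (beta / 2)
    (sum_n_m (G := C_AbelianMonoid)
       (fun r => Cmult (exp_dd (- (beta / 2)) (pts x 0 r))
                   (sum_n_m (G := C_AbelianMonoid)
                      (fun m => exp_dd (- (beta / 2)) (pts x r q ++ [x m]))
                      (S j) q))
       0 j).
Proof.
  (* The identity holds for every real [beta]. *)
  intros Hq Hj _.
  exact (is_RInt_fidelity x j q ltac:(lia) beta).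
Qed.
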